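(* Let $\mathbf y_t\in\mathbb{R}^q$ and $\mathbf z_t\in\mathbb{R}^m$, $1\le t\le T$, be observed (mean zero) time series, let $c,k\ge0$ be integers and $h\ge0$. Put $\mathbf x_t=(\mathbf z_t',\dots,\mathbf z_{t-c}')'\in\mathbb{R}^p$, $p=m(c+1)$, and let $\mathcal X_t$ be the $(k+1)\times p$ matrix with rows $\mathbf x_t',\dots,\mathbf x_{t-k}'$. For $\boldsymbol\beta\in\mathbb{R}^p$ and a $q\times(k+1)$ matrix $\boldsymbol\Gamma$ let $\mathbf e_{t+h|t}(\boldsymbol\beta,\boldsymbol\Gamma)=\mathbf y_{t+h}-\boldsymbol\Gamma\mathcal X_t\boldsymbol\beta$ and $$G_2(\boldsymbol\beta,\boldsymbol\Gamma)=\Big|\frac{1}{T-h-c-k}\sum_{t=c+k+1}^{T-h}\mathbf e_{t+h|t}(\boldsymbol\beta,\boldsymbol\Gamma)\mathbf e_{t+h|t}(\boldsymbol\beta,\boldsymbol\Gamma)'\Big|,$$ where $|\cdot|$ denotes the determinant. Let $(\widehat{\boldsymbol\beta},\widehat{\boldsymbol\Gamma})$ minimize $G_2$ and set $$\widehat{\boldsymbol\Sigma}=\frac{1}{T-c-k-h}\sum_{t=c+k+1}^{T-h}(\mathbf y_{t+h}-\widehat{\boldsymbol\Gamma}\mathcal X_t\widehat{\boldsymbol\beta})(\mathbf y_{t+h}-\widehat{\boldsymbol\Gamma}\mathcal X_t\widehat{\boldsymbol\beta})'.$$ Then (whenever the inverses below exist, in particular $|\widehat{\boldsymbol\Sigma}|>0$)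 $$\widehat{\boldsymbol\beta}=\Big[\frac{1}{T-c-k-h}\sum_{t=c+k+1}^{T-h}\mathcal X_t'\widehat{\boldsymbol\Gamma}'\widehat{\boldsymbol\Sigma}^{-1}\widehat{\boldsymbol\Gamma}\mathcal X_t\Big]^{-1}\Big[\frac{1}{T-c-k-h}\sum_{t=c+k+1}^{T-h}\mathcal X_t'\widehat{\boldsymbol\Gamma}'\widehat{\boldsymbol\Sigma}^{-1}\mathbf y_{t+h}\Big]$$ and $\widehat{\boldsymbol\Gamma}=\mathcal G(\widehat{\boldsymbol\beta})$, where $\mathcal G(\boldsymbol\beta)=\mathbf Y'\mathbf F(\boldsymbol\beta)(\mathbf F(\boldsymbol\beta)'\mathbf F(\boldsymbol\beta))^{-1}$.
   Context: $\mathbf f_t(\boldsymbol\beta)=\mathcal X_t\boldsymbol\beta\in\mathbb{R}^{k+1}$. $\mathbf F(\boldsymbol\beta)$ is the $(T-h-c-k)\times(k+1)$ matrix with rows $\mathbf f_t(\boldsymbol\beta)'$, $t=c+k+1,\dots,T-h$, and $\mathbf Y$ is the $(T-h-c-k)\times q$ matrix with corresponding rows $\mathbf y_{t+h}'$; $\mathcal G(\boldsymbol\beta)$ is the least squares coefficient matrix of regressing $\mathbf y_{t+h}$ on $\mathbf f_t(\boldsymbol\beta)$. *)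

From HB Require Import structures.
From mathcomp Require Import all_boot all_order all_algebra.
From mathcomp Require Import reals.

Import Order.TTheory GRing.Theory Num.Theory.
Local Open Scope ring_scope.

(* Data: y t in R^q and z t in R^m (only t = 1..T are used by the
   definitions below when t ranges over c+k+1 .. T-h). *)

(* x_t = (z_t', z_{t-1}', ..., z_{t-c}')' in R^p, p = (c+1) m
   (mxvec is row-major, so the entries are z_t, then z_{t-1}, ...) *)
Definition xvec {R : realType} (m c : nat) (z : nat -> 'cV[R]_m) (t : nat)
  : 'cV[R]_(c.+1 * m) :=
  (mxvec (\matrix_(j < c.+1, l < m) z (t - j)%N l 0))^T.

Definition calX {R : realType} (m c k : nat) (z : nat -> 'cV[R]_m) (t : nat)
  : 'M[R]_(k.+1, c.+1 * m) :=
  \matrix_(i < k.+1, j < c.+1 * m) xvec m c z (t - i)%N j 0.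

Definition Neff (c k h T : nat) : nat := (T - h - c - k)%N.

Definition tsum {R : realType} (c k h T : nat) n n' (F : nat -> 'M[R]_(n, n'))
  : 'M[R]_(n, n') :=
  \sum_((c + k).+1 <= t < (T - h).+1) F t.

Definition err {R : realType} (q m c k h : nat)
  (y : nat -> 'cV[R]_q) (z : nat -> 'cV[R]_m)
  (beta : 'cV[R]_(c.+1 * m)) (Gam : 'M[R]_(q, k.+1)) (t : nat) : 'cV[R]_q :=
  y (t + h)%N - Gam *m calX m c k z t *m beta.

Definition SigmaHat {R : realType} (q m c k h T : nat)
  (y : nat -> 'cV[R]_q) (z : nat -> 'cV[R]_m)
  (beta : 'cV[R]_(c.+1 * m)) (Gam : 'M[R]_(q, k.+1)) : 'M[R]_q :=
  ((Neff c k h T)%:R)^-1 *: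
    tsum c k h T q q
      (fun t => err q m c k h y z beta Gam t *m (err q m c k h y z beta Gam t)^T).

Definition G2 {R : realType} (q m c k h T : nat)
  (y : nat -> 'cV[R]_q) (z : nat -> 'cV[R]_m)
  (beta : 'cV[R]_(c.+1 * m)) (Gam : 'M[R]_(q, k.+1)) : R :=
  \det (SigmaHat q m c k h T y z beta Gam).

Definition fvec {R : realType} (m c k : nat) (z : nat -> 'cV[R]_m)
  (beta : 'cV[R]_(c.+1 * m)) (t : nat) : 'cV[R]_k.+1 :=
  calX m c k z t *m beta.

Definition Fmat {R : realType} (m c k h T : nat) (z : nat -> 'cV[R]_m)
  (beta : 'cV[R]_(c.+1 * m)) : 'M[R]_(Neff c k h T, k.+1) :=
  \matrix_(i < Neff c k h T, j < k.+1) fvec m c k z beta ((c + k).+1 + i)%N j 0.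

Definition Ymat {R : realType} (q c k h T : nat) (y : nat -> 'cV[R]_q)
  : 'M[R]_(Neff c k h T, q) :=
  \matrix_(i < Neff c k h T, j < q) y ((c + k).+1 + i + h)%N j 0.

Definition calG {R : realType} (q m c k h T : nat)
  (y : nat -> 'cV[R]_q) (z : nat -> 'cV[R]_m)
  (beta : 'cV[R]_(c.+1 * m)) : 'M[R]_(q, k.+1) :=
  (Ymat q c k h T y)^T *m Fmat m c k h T z beta
    *m invmx ((Fmat m c k h T z beta)^T *m Fmat m c k h T z beta).

From HB Require Import structures.
From mathcomp Require Import all_boot all_order all_algebra.
From mathcomp Require Import fingroup perm.
From mathcomp Require Import reals.
From mathcomp Require Import ring lra.
Import Order.TTheory GRing.Theory Num.Theory.
Local Open Scope ring_scope.

(* At a minimiser of G2 = det Sigma(beta, Gamma), move beta or Gamma along a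
   line with parameter s: the residuals become e_t - s g_t, so Sigma becomes
   Sigma + s E + s^2 P with E = -(M + M') and M = N^-1 sum_t g_t e_t'.  Since
   det (Sigma + s E + s^2 P) = det Sigma (1 + s tr (Sigma^-1 E) + O(s^2)) and
   det Sigma > 0, minimality forces tr (Sigma^-1 M) = 0 for every direction.
   The directions g_t = Gamma X_t d give the generalized least squares normal
   equations for beta, and g_t = D f_t(beta) give Y'F(beta) = Gamma F'F. *)

Section DetFirstOrder.
Context {F : fieldType}.

Lemma prod_1DX_modX2 (I : Type) (r : seq I) (f : I -> {poly F}) :
  'X^2 %| \prod_(i <- r) (1 + 'X * f i) - (1 + 'X * \sum_(i <- r) f i).
Proof.
elim: r => [|a r IH]; first by rewrite !big_nil mulr0 addr0 subrr dvdp0.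
rewrite !big_cons; set p := \prod_(i <- r) _; set s := \sum_(i <- r) _.
have -> : (1 + 'X * f a) * p - (1 + 'X * (f a + s)) =
          (1 + 'X * f a) * (p - (1 + 'X * s)) + 'X^2 * (f a * s) by ring.
by apply: dvdp_add; [exact: dvdp_mull | exact: dvdp_mulIl].
Qed.

Lemma det_1DX_modX2 {n} (N : 'M[{poly F}]_n) :
  'X^2 %| \det (1%:M + 'X *: N) - (1 + 'X * \tr N).
Proof.
rewrite /determinant (bigD1 1%g) //= odd_perm1 expr0 mul1r addrAC.
apply: dvdp_add.
  rewrite /mxtrace (eq_bigr (fun i => 1 + 'X * N i i)); first exact: prod_1DX_modX2.
  by move=> i _; rewrite perm1 !mxE eqxx.
apply: (big_ind (fun p => 'X^2 %| p)) => [|u v|s s_neq1]; rewrite ?dvdp0 //.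
  exact: dvdp_add.
(* A permutation s <> 1 moves some i, hence also s i, so its term has the two
   off-diagonal factors at i and at s i, both multiples of 'X. *)
have [i si_neq_i] : exists i, s i != i.
  apply/existsP; apply: contraR s_neq1; rewrite negb_exists => /forallP fix_s.
  by apply/eqP/permP => i; rewrite perm1; apply/eqP; rewrite -[_ == _]negbK.
have ssi_neq_si : s (s i) != s i by apply: contra si_neq_i => /eqP /perm_inj ->.
rewrite (bigD1 i) // (bigD1 (s i)) //= !mxE eq_sym (negbTE si_neq_i).
rewrite eq_sym (negbTE ssi_neq_si) !add0r.
set r := \prod_(j | _) _; set sg := (-1) ^+ s.
have -> : sg * ('X * N i (s i) * ('X * N (s i) (s (s i)) * r)) =
          'X^2 * (sg * N i (s i) * N (s i) (s (s i)) * r) by ring.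
exact: dvdp_mulIl.
Qed.

End DetFirstOrder.

Section OuterProducts.
Context {R : comPzRingType}.

Lemma mxtrace_mul_trmx n (S M : 'M[R]_n) :
  S^T = S -> \tr (S *m M^T) = \tr (S *m M).
Proof. by move=> S_sym; rewrite -mxtrace_tr trmx_mul trmxK S_sym mxtrace_mulC. Qed.

Lemma outer_subZ q (e g : 'cV[R]_q) (s : R) :
  (e - s *: g) *m (e - s *: g)^T =
  e *m e^T + s *: - (g *m e^T + e *m g^T) + s ^+ 2 *: (g *m g^T).
Proof. by apply/matrixP => i j; rewrite !mxE !big_ord1 !mxE; ring. Qed.

Lemma trmx_scaled_outer_sum {m n p} {I : Type} {r : seq I} {a : R}
    {u : I -> 'M[R]_(m, n)} {v : I -> 'M[R]_(p, n)} :
  (a *: \sum_(i <- r) u i *m (v i)^T)^T = a *: \sum_(i <- r) v i *m (u i)^T.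
Proof.
rewrite linearZ /= raddf_sum; congr (_ *: _).
by apply: eq_bigr => i _ /=; rewrite trmx_mul trmxK.
Qed.

End OuterProducts.

Section RealDomainBounds.
Context {R : realDomainType}.

Lemma norm_horner_le_sum_coef (p : {poly R}) {x : R} :
  `|x| <= 1 -> `|p.[x]| <= \sum_(i < size p) `|p`_i|.
Proof.
move=> x_le1; rewrite horner_coef; apply: (le_trans (ler_norm_sum _ _ _)).
apply: ler_sum => i _; rewrite normrM normrX; apply: ler_piMr => //.
exact: exprn_ile1.
Qed.

Lemma mxtrace_mulmx_trmx_eq0 m n (M : 'M[R]_(m, n)) :
  \tr (M *m M^T) = 0 -> M = 0.
Proof.
have sq_ge0 i j : 0 <= M i j * M i j by rewrite -expr2 sqr_ge0.
have row_ge0 i : 0 <= \sum_j M i j * M i j by apply: sumr_ge0.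
rewrite /mxtrace (eq_bigr (fun i => \sum_j M i j * M i j)); last first.
  by move=> i _; rewrite mxE; apply: eq_bigr => j _; rewrite mxE.
move=> /(psumr_eq0P (fun i _ => row_ge0 i)) row0; apply/matrixP => i j.
have /(psumr_eq0P (fun j _ => sq_ge0 i j))/(_ j isT)/eqP := row0 i isT.
by rewrite mulf_eq0 orbb mxE => /eqP.
Qed.

End RealDomainBounds.

Section QuadraticPerturbation.
Context {R : realFieldType}.

Lemma lin_coef_eq0_of_ge0 {a : R} (p : {poly R}) :
  (forall s, 0 <= s * a + s ^+ 2 * p.[s]) -> a = 0.
Proof.
move=> ge0.
(* Evaluate at s = -a / 2K, where K bounds |a| and |p| on [-1, 1]. *)
pose K := \sum_(i < size p) `|p`_i| + `|a| + 1.
have coef_ge0 : 0 <= \sum_(i < size p) `|p`_i| by apply: sumr_ge0.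
have a_le_K : `|a| <= K by rewrite /K; lra.
have K_gt0 : 0 < K by rewrite /K; have := normr_ge0 a; lra.
pose s := - a / (2 * K).
have sK : s * (2 * K) = - a by rewrite mulfVK // mulf_neq0 // gt_eqF.
have s_le1 : `|s| <= 1.
  move: a_le_K; rewrite !ler_norml => /andP[? ?]; apply/andP; split; nra.
have ps_le_K : p.[s] <= K.
  have := norm_horner_le_sum_coef p s_le1; have := ler_norm p.[s].
  have := normr_ge0 a; rewrite /K; lra.
have : s ^+ 2 * p.[s] <= s ^+ 2 * K by rewrite ler_wpM2l ?sqr_ge0.
have := ge0 s => ? ?.
have : K * s ^+ 2 <= 0 by nra.
rewrite pmulr_rle0 // => ?.
have s0 : s = 0 by nra.
by apply/eqP; rewrite -oppr_eq0 -sK s0 mul0r.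
Qed.

Lemma det_min_trace_eq0 {n} {S E P : 'M[R]_n} :
  0 < \det S -> (forall s : R, \det S <= \det (S + s *: E + s ^+ 2 *: P)) ->
  \tr (invmx S *m E) = 0.
Proof.
move=> det_gt0 det_min.
have S_unit : S \in unitmx by rewrite unitmxE unitfE gt_eqF.
set B := invmx S *m E; set C := invmx S *m P.
pose N := map_mx polyC B + 'X *: map_mx polyC C.
have [r detN] := dvdpP _ _ (det_1DX_modX2 N).
pose p := (\tr C)%:P + r.
have detE s : \det (S + s *: E + s ^+ 2 *: P) =
              \det S * (1 + (s * \tr B + s ^+ 2 * p.[s])).
  have -> : S + s *: E + s ^+ 2 *: P =
            S *m map_mx (horner_eval s) (1%:M + 'X *: N).
    have -> : map_mx (horner_eval s) (1%:M + 'X *: N) = 1%:M + s *: B + s ^+ 2 *: C.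
      apply/matrixP => i j.
      by rewrite !mxE /horner_eval !hornerE hornerMn hornerC; ring.
    by rewrite !mulmxDr mulmx1 -!scalemxAr /B /C !mulKVmx.
  rewrite det_mulmx det_map_mx /= horner_evalE; congr (_ * _).
  move/eqP: detN; rewrite subr_eq => /eqP ->.
  have trN : (\tr N).[s] = \tr B + s * \tr C.
    rewrite /mxtrace horner_sum mulr_sumr -big_split /=.
    by apply: eq_bigr => i _; rewrite !mxE !hornerE.
  by rewrite /p !(hornerD, hornerM, hornerXn, hornerX, hornerC) trN; ring.
apply: (lin_coef_eq0_of_ge0 p) => s.
by have := det_min s; rewrite detE -{1}[\det S]mulr1 ler_pM2l // lerDl.
Qed.

Lemma det_outer_sum_min_trace_eq0 q (I : Type) (r : seq I) (a : R)
    (e g : I -> 'cV[R]_q) :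
  let S := a *: \sum_(i <- r) e i *m (e i)^T in
  0 < \det S ->
  (forall s : R,
     \det S <= \det (a *: \sum_(i <- r) (e i - s *: g i) *m (e i - s *: g i)^T)) ->
  \tr (invmx S *m (a *: \sum_(i <- r) g i *m (e i)^T)) = 0.
Proof.
move=> S det_gt0 det_min; set M := a *: \sum_(i <- r) _.
have S_sym : S^T = S by rewrite trmx_scaled_outer_sum.
have SsE s : a *: \sum_(i <- r) (e i - s *: g i) *m (e i - s *: g i)^T =
             S + s *: - (M + M^T) + s ^+ 2 *: (a *: \sum_(i <- r) g i *m (g i)^T).
  under eq_bigr do rewrite outer_subZ.
  rewrite !big_split /= !scalerDr -!scaler_sumr; congr (_ + _ + _).
    rewrite scalerA mulrC -scalerA sumrN big_split /= trmx_scaled_outer_sum.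
    by rewrite scalerN scalerDr.
  by rewrite scalerA mulrC -scalerA.
have : \tr (invmx S *m - (M + M^T)) = 0.
  apply: (det_min_trace_eq0 (P := a *: \sum_(i <- r) g i *m (g i)^T) det_gt0).
  by move=> s; rewrite -SsE.
rewrite mulmxN mulmxDr raddfN /= mxtraceD mxtrace_mul_trmx; last first.
  by rewrite trmx_inv S_sym.
by move/eqP; rewrite oppr_eq0 -mulr2n mulrn_eq0 /= => /eqP.
Qed.

End QuadraticPerturbation.

Section LeastGeneralizedVariance.
Context {R : realType} {q m c k h T : nat}.
Context {y : nat -> 'cV[R]_q} {z : nat -> 'cV[R]_m}.

Local Notation X := (calX m c k z).
Local Notation f := (fvec m c k z).
Local Notation e := (err q m c k h y z).
Local Notation Sigma := (SigmaHat q m c k h T y z).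
Local Notation F := (Fmat m c k h T z).
Local Notation Y := (Ymat q c k h T y).
Local Notation N := ((Neff c k h T)%:R : R).
Local Notation tsumt := (tsum c k h T _ _).

Lemma err_shift_beta beta Gam d s t :
  e (beta + s *: d) Gam t = e beta Gam t - s *: (Gam *m X t *m d).
Proof. by rewrite /err mulmxDr -scalemxAr opprD addrA. Qed.

Lemma err_shift_Gam beta Gam D s t :
  e beta (Gam + s *: D) t = e beta Gam t - s *: (D *m f beta t).
Proof. by rewrite /err /fvec !mulmxDl -!scalemxAl opprD addrA !mulmxA. Qed.

Lemma SigmaHat_sym beta Gam : (Sigma beta Gam)^T = Sigma beta Gam.
Proof. exact: trmx_scaled_outer_sum. Qed.

Lemma tsum_mxE n n' (G : nat -> 'M[R]_(n, n')) i j :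
  tsumt G i j = \sum_(l < Neff c k h T) G ((c + k).+1 + l)%N i j.
Proof.
rewrite /tsum summxE /Neff -{1}[(c + k).+1]add0n big_addn subSS subnDA big_mkord.
by apply: eq_bigr => l _; rewrite addnC.
Qed.

Lemma trmx_Ymat_mul_Fmat beta :
  Y^T *m F beta = tsumt (fun t => y (t + h)%N *m (f beta t)^T).
Proof.
apply/matrixP => i j; rewrite tsum_mxE !mxE.
by apply: eq_bigr => l _; rewrite !mxE big_ord1 !mxE.
Qed.

Lemma trmx_Fmat_mul_Fmat beta :
  (F beta)^T *m F beta = tsumt (fun t => f beta t *m (f beta t)^T).
Proof.
apply/matrixP => i j; rewrite tsum_mxE !mxE.
by apply: eq_bigr => l _; rewrite !mxE big_ord1 !mxE.
Qed.

Lemma Neff_neq0 beta : (F beta)^T *m F beta \in unitmx -> N != 0.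
Proof.
rewrite pnatr_eq0; apply: contraTN => /eqP N0.
suff -> : (F beta)^T *m F beta = 0 by rewrite unitmxE det0 unitr0.
by apply/matrixP => i j; rewrite trmx_Fmat_mul_Fmat tsum_mxE N0 big_ord0 mxE.
Qed.

Context {betah : 'cV[R]_(c.+1 * m)} {Gamh : 'M[R]_(q, k.+1)}.
Hypothesis G2_min : forall beta Gam,
  G2 q m c k h T y z betah Gamh <= G2 q m c k h T y z beta Gam.
Hypothesis det_Sigma_gt0 : 0 < \det (Sigma betah Gamh).

Local Notation Si := (invmx (Sigma betah Gamh)).

Lemma invSigma_sym : Si^T = Si.
Proof. by rewrite trmx_inv SigmaHat_sym. Qed.

Lemma G2_min_trace_eq0 (g : nat -> 'cV[R]_q) :
  (forall s, exists beta Gam, forall t, e beta Gam t = e betah Gamh t - s *: g t) ->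
  \tr (Si *m (N^-1 *: tsumt (fun t => g t *m (e betah Gamh t)^T))) = 0.
Proof.
move=> along_g; apply: det_outer_sum_min_trace_eq0 => // s.
have [beta [Gam errE]] := along_g s; have := G2_min beta Gam.
rewrite /G2 /SigmaHat /tsum.
by under [in RHS in _ <= RHS -> _]eq_bigr do rewrite errE.
Qed.

Lemma gls_normal_eq :
  N^-1 *: tsumt (fun t => (X t)^T *m Gamh^T *m Si *m Gamh *m X t) *m betah =
  N^-1 *: tsumt (fun t => (X t)^T *m Gamh^T *m Si *m y (t + h)%N).
Proof.
pose v := N^-1 *: tsumt (fun t => (X t)^T *m Gamh^T *m Si *m e betah Gamh t).
have tr_v d : \tr (d^T *m v) = 0.
  rewrite -(G2_min_trace_eq0 (fun t => Gamh *m X t *m d)); last first.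
    by move=> s; exists (betah + s *: d), Gamh => t; exact: err_shift_beta.
  rewrite -!scalemxAr !mxtraceZ /tsum mulmx_sumr !raddf_sum; congr (_ * _).
  apply: eq_bigr => t _ /=.
  rewrite -mxtrace_tr !trmx_mul !trmxK invSigma_sym -!mulmxA mxtrace_mulC.
  by rewrite !mulmxA.
have v0 : v = 0.
  by apply: trmx_inj; rewrite trmx0; apply: mxtrace_mulmx_trmx_eq0; rewrite trmxK.
apply/eqP; rewrite eq_sym -subr_eq0 -v0 -scalemxAl -scalerBr /v /tsum.
rewrite mulmx_suml -sumrB; apply/eqP; congr (_ *: _); apply: eq_bigr => t _.
by rewrite /err mulmxBr !mulmxA.
Qed.

Lemma ols_normal_eq :
  (F betah)^T *m F betah \in unitmx ->
  Y^T *m F betah = Gamh *m ((F betah)^T *m F betah).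
Proof.
move=> /Neff_neq0 N_neq0.
pose W := N^-1 *: tsumt (fun t => e betah Gamh t *m (f betah t)^T).
have tr_W D : \tr (Si *m D *m W^T) = 0.
  rewrite -(G2_min_trace_eq0 (fun t => D *m f betah t)); last first.
    by move=> s; exists betah, (Gamh + s *: D) => t; exact: err_shift_Gam.
  rewrite /W /tsum (trmx_scaled_outer_sum (u := e betah Gamh)).
  rewrite -mulmxA -scalemxAr mulmx_sumr.
  by congr (\tr (_ *m (_ *: _))); apply: eq_bigr => t _; rewrite mulmxA.
have W0 : W = 0.
  apply: mxtrace_mulmx_trmx_eq0; have := tr_W (Sigma betah Gamh *m W).
  by rewrite mulmxA mulVmx ?mul1mx // unitmxE unitfE gt_eqF.
have WE : W = N^-1 *: (Y^T *m F betah - Gamh *m ((F betah)^T *m F betah)).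
  rewrite trmx_Ymat_mul_Fmat trmx_Fmat_mul_Fmat /tsum mulmx_sumr -sumrB.
  by congr (_ *: _); apply: eq_bigr => t _; rewrite /err mulmxBl /fvec !mulmxA.
by move/eqP: W0; rewrite WE scaler_eq0 invr_eq0 (negbTE N_neq0) subr_eq0 => /eqP.
Qed.

End LeastGeneralizedVariance.

Theorem theorem4 (R : realType) (q m c k h T : nat)
  (y : nat -> 'cV[R]_q) (z : nat -> 'cV[R]_m)
  (betah : 'cV[R]_(c.+1 * m)) (Gamh : 'M[R]_(q, k.+1)) :
  (forall (beta : 'cV[R]_(c.+1 * m)) (Gam : 'M[R]_(q, k.+1)),
      G2 q m c k h T y z betah Gamh <= G2 q m c k h T y z beta Gam) ->
  let Sig := SigmaHat q m c k h T y z betah Gamh in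
  let N := (Neff c k h T)%:R : R in
  let A := N^-1 *: tsum c k h T (c.+1 * m) (c.+1 * m)
      (fun t => (calX m c k z t)^T *m Gamh^T *m invmx Sig *m Gamh *m calX m c k z t) in
  let b := N^-1 *: tsum c k h T (c.+1 * m) 1
      (fun t => (calX m c k z t)^T *m Gamh^T *m invmx Sig *m y (t + h)%N) in
  0 < \det Sig ->
  A \in unitmx ->
  (Fmat m c k h T z betah)^T *m Fmat m c k h T z betah \in unitmx ->
  betah = invmx A *m b /\ Gamh = calG q m c k h T y z betah.
Proof.
move=> G2_min Sig N A b det_gt0 A_unit F_unit; split.
  have Ab : A *m betah = b := gls_normal_eq G2_min det_gt0.
  by rewrite -Ab mulKmx.
by rewrite /calG (ols_normal_eq G2_min det_gt0 F_unit) mulmxK.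
Qed.
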